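(* Let $V:[-1,1]\to[0,\infty)$ be continuous, write $V(\lambda)$ for $V(\cos\lambda)$, assume $\lambda\mapsto V(\lambda)$ is $C^2(-\pi,\pi)$ and that there exist an interval $(a,b)\subset\sigma$ and constants $C_1,C_2>0$ with $\sup_{(a,b)}|V'''|\le C_1$ and $\rho\ge C_2$ on $(a,b)$. Then for any $\delta>0$, all $n$ and all $\lambda\in[-\pi,\pi]$ (all integrals over $[-\pi,\pi]$): $$\Big|\int(e^{i\lambda}-e^{i\mu})|K_n(\lambda,\mu)|^2d\mu\Big|\le\tfrac12\big[|\psi_{n-1}^{(n)}(\lambda)|^2+|\psi_n^{(n)}(\lambda)|^2\big],$$ $$\int|e^{i\lambda}-e^{i\mu}|^2|K_n(\lambda,\mu)|^2d\mu\le|\psi_{n-1}^{(n)}(\lambda)|^2+|\psi_n^{(n)}(\lambda)|^2,$$ $$\iint|e^{i\lambda}-e^{i\mu}|^2|K_n(\lambda,\mu)|^2d\lambda\,d\mu\le2,$$ $$\int_{|e^{i\lambda}-e^{i\mu}|>\delta}|K_n(\lambda,\mu)|^2d\mu\le\delta^{-2}\big[|\psi_{n-1}^{(n)}(\lambda)|^2+|\psi_n^{(n)}(\lambda)|^2\big],$$ $$\iint_{|e^{i\lambda}-e^{i\mu}|>\delta}|K_n(\lambda,\mu)|^2d\lambda\,d\mu\le2\delta^{-2}.$$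
   Context: For each $n$, let $P_k^{(n)}$, $k=0,1,2,\dots$, be obtained by the Gram–Schmidt procedure from $\{e^{ik\lambda}\}_{k\ge0}$ in $L^2([-\pi,\pi],e^{-nV(\lambda)}d\lambda)$, let $\psi_k^{(n)}(\lambda)=P_k^{(n)}(\lambda)e^{-nV(\lambda)/2}$ (orthonormal in $L^2[-\pi,\pi]$), and $K_n(\lambda,\mu)=\sum_{l=0}^{n-1}\psi_l^{(n)}(\lambda)\overline{\psi_l^{(n)}(\mu)}$. Here $\sigma$ and $\rho$ are the support and density of the limiting normalized counting measure of the eigenvalue angles for the density $p_n(\lambda_1,\dots,\lambda_n)=Z_n^{-1}\prod_{j<k}|e^{i\lambda_j}-e^{i\lambda_k}|^2\exp\{-n\sum_jV(\lambda_j)\}$ on $[-\pi,\pi]^n$ (this limit is known to exist, with compact support and bounded density, for $V\in C^2$). *)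

From HB Require Import structures.
From mathcomp Require Import all_boot all_order all_algebra.
From mathcomp.real_closed Require Export complex.
From mathcomp Require Import all_classical all_reals all_analysis.
Set Implicit Arguments. Unset Strict Implicit. Unset Printing Implicit Defensive.
Import Order.TTheory GRing.Theory Num.Theory.
Import numFieldNormedType.Exports.
Local Open Scope classical_set_scope.
Local Open Scope ring_scope.
Local Open Scope complex_scope.

Section Defs.
Variable R : realType.
Notation mu := (@lebesgue_measure R).

Definition Ipi : set R := `[- pi, pi]%classic.

Definition eix (x : R) : R[i] := (cos x +i* sin x)%C.

Definition sqnorm (z : R[i]) : R := (complex.Re z) ^+ 2 + (complex.Im z) ^+ 2.

Definition cint (f : R -> R[i]) : R[i] :=
  ((Rintegral mu Ipi (fun x => complex.Re (f x)))
     +i* (Rintegral mu Ipi (fun x => complex.Im (f x))))%C.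

Definition weight (V : R -> R) (n : nat) (x : R) : R := expR (- (n%:R * V (cos x))).

Definition Ppoly (c : nat -> nat -> nat -> R[i]) (n k : nat) (x : R) : R[i] :=
  \sum_(j < k.+1) c n k j * eix x ^+ j.

(* c describes the output of the Gram-Schmidt procedure applied to
   (e^{ik lambda})_{k>=0} in L^2([-pi,pi], e^{-nV} d lambda): P_k is in the span of
   e^{ij lambda}, j <= k, with positive leading coefficient, and the family is
   orthonormal. *)
Definition gram_schmidt_coefs (V : R -> R) (c : nat -> nat -> nat -> R[i]) : Prop :=
  forall n : nat,
    (forall k j : nat, (k < j)%N -> c n k j = 0) /\
    (forall k : nat, 0 < c n k k) /\
    (forall k l : nat,
        cint (fun x => (weight V n x)%:C * Ppoly c n k x * (Ppoly c n l x)^*)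
        = ((k == l)%:R)%:C).

Definition psi (V : R -> R) c (n k : nat) (x : R) : R[i] :=
  (expR (- (n%:R * V (cos x)) / 2))%:C * Ppoly c n k x.

Definition Kn (V : R -> R) c (n : nat) (x y : R) : R[i] :=
  \sum_(l < n) psi V c n l x * (psi V c n l y)^*.

(* iterated Lebesgue integral over [-pi,pi]^k of F : (nat -> R) -> R
   (only the first k coordinates are used) *)
Definition ncons (x : R) (l : nat -> R) : nat -> R :=
  fun j => if j is j'.+1 then l j' else x.

Fixpoint iint (k : nat) (F : (nat -> R) -> R) : R :=
  match k with
  | 0%N => F (fun _ => 0)
  | k'.+1 => Rintegral mu Ipi (fun x => iint k' (fun l => F (ncons x l)))
  end.

(* unnormalized joint eigenvalue-angle density
   prod_{j<k} |e^{i l_j} - e^{i l_k}|^2 exp{-n sum_j V(l_j)} *)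
Definition jdens (V : R -> R) (n : nat) (l : nat -> R) : R :=
  (\prod_(j < n) \prod_(k < n | (j < k)%N) sqnorm (eix (l j) - eix (l k)))
  * expR (- (n%:R * \sum_(j < n) V (cos (l j)))).

(* expectation, under p_n, of the normalized counting measure tested on f *)
Definition mean_counting (V : R -> R) (n : nat) (f : R -> R) : R :=
  iint n (fun l => (n%:R^-1 * \sum_(j < n) f (l j)) * jdens V n l)
  / iint n (jdens V n).

Definition limit_density (V : R -> R) (rho : R -> R) : Prop :=
  (forall x, 0 <= rho x) /\ measurable_fun Ipi rho /\
  forall f : R -> R, {within Ipi, continuous f} ->
    (fun n : nat => mean_counting V n f) @ \oo
      --> Rintegral mu Ipi (fun x => f x * rho x).

Definition limit_support (rho : R -> R) : set R :=
  [set x | Ipi x /\ forall e : R, 0 < e ->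
      0 < Rintegral mu (Ipi `&` ball x e) rho].

End Defs.

(* Multiplication by u = e^{i mu} maps psi_l into the span of psi_0, ..., psi_{l+1}, because the
   P_k are triangular in the powers of e^{i mu}.  Writing f = conj K_n(lam, .) = sum_{l<n}
   conj psi_l(lam) psi_l, orthonormality collapses int (e^{i lam} - u) |f|^2 to the single
   boundary term conj psi_{n-1}(lam) a psi_n(lam), where a = <u psi_{n-1}, psi_n> has |a| <= 1
   by Bessel's inequality; AM-GM gives the first bound.  On the unit circle
   |z - w|^2 = 2 Re ((z - w) conj z), so the second moment is twice the real part of a rotated
   first moment.  The remaining bounds follow by Chebyshev's inequality and int |psi_k|^2 = 1. *)

From HB Require Import structures.
From mathcomp Require Import all_boot all_order all_algebra.
From mathcomp.real_closed Require Import complex.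
From mathcomp Require Import all_classical all_reals all_analysis.
From mathcomp Require Import ring lra.
Set Implicit Arguments.
Unset Strict Implicit.
Unset Printing Implicit Defensive.
Import Order.TTheory GRing.Theory Num.Theory.
Import numFieldNormedType.Exports.
Local Open Scope classical_set_scope.
Local Open Scope ring_scope.
Local Open Scope complex_scope.

Section ComplexFacts.
Variable R : realType.
Implicit Types (x y w : R[i]) (a b : R).

Lemma Re_mul x y : complex.Re (x * y) = complex.Re x * complex.Re y - complex.Im x * complex.Im y.
Proof. by case: x => ? ?; case: y. Qed.

Lemma Im_mul x y : complex.Im (x * y) = complex.Re x * complex.Im y + complex.Im x * complex.Re y.
Proof. by case: x => ? ?; case: y. Qed.

Lemma Re_conj x : complex.Re x^*%R = complex.Re x.
Proof. by case: x. Qed.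

Lemma Im_conj x : complex.Im x^*%R = - complex.Im x.
Proof. by case: x. Qed.

Lemma conjM x y : (x * y)^*%R = x^*%R * y^*%R.
Proof. exact: rmorphM. Qed.

Lemma conj_sum K (F : 'I_K -> R[i]) : (\sum_(i < K) F i)^*%R = \sum_(i < K) (F i)^*%R.
Proof. exact: rmorph_sum. Qed.

Lemma conjB x y : (x - y)^*%R = x^*%R - y^*%R.
Proof. exact: rmorphB. Qed.

Lemma conj_real a : (a%:C)^*%R = a%:C.
Proof. exact: conjc_real. Qed.

Lemma realM a b : (a * b)%:C = a%:C * b%:C.
Proof. exact: rmorphM. Qed.

Lemma sqnormE x : (sqnorm x)%:C = x * x^*%R.
Proof. by rewrite -sqr_normc -add_Re2_Im2. Qed.

Lemma sqnorm0 : sqnorm (0 : R[i]) = 0.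
Proof. by rewrite /sqnorm /= expr0n addr0. Qed.

Lemma sqnorm_ge0 x : 0 <= sqnorm x.
Proof. by rewrite /sqnorm addr_ge0 ?sqr_ge0. Qed.

Lemma sqnormM x y : sqnorm (x * y) = sqnorm x * sqnorm y.
Proof. by rewrite /sqnorm Re_mul Im_mul; ring. Qed.

Lemma sqnormJ x : sqnorm x^*%R = sqnorm x.
Proof. by rewrite /sqnorm Re_conj Im_conj sqrrN. Qed.

Lemma sqnorm_eix a : sqnorm (eix a) = 1.
Proof. exact: cos2Dsin2. Qed.

Lemma sqnorm_sub_unit x y : sqnorm x = 1 -> sqnorm y = 1 ->
  (sqnorm (x - y))%:C = (x - y) * x^*%R + ((x - y) * x^*%R)^*%R.
Proof.
move=> x1 y1; have xx : x * x^*%R = 1 by rewrite -sqnormE x1.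
have yy : y * y^*%R = 1 by rewrite -sqnormE y1.
rewrite sqnormE; have -> : (x - y) * (x - y)^*%R =
    (x - y) * x^*%R + ((x - y) * x^*%R)^*%R + (y * y^*%R - x * x^*%R).
  by rewrite !conjB conjM conjCK; ring.
by rewrite xx yy subrr addr0.
Qed.

Lemma Re_le_normc x : (complex.Re x)%:C <= `|x|.
Proof. by apply: le_trans (normc_ge_Re x); rewrite lecR ler_norm. Qed.

(* [|w| <= sqrt (a b) <= (a + b) / 2] *)
Lemma normc_le_mean w a b : 0 <= a -> 0 <= b -> sqnorm w <= a * b ->
  `|w| <= (2^-1 * (a + b))%:C.
Proof.
move=> a0 b0 wab; rewrite normc_def lecR.
have m0 : 0 <= 2^-1 * (a + b) by rewrite mulr_ge0 ?invr_ge0 ?addr_ge0.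
rewrite -(ger0_norm m0) -sqrtr_sqr ler_sqrt ?sqr_ge0 //.
have := sqr_ge0 (a - b); move: wab; rewrite /sqnorm; nra.
Qed.

End ComplexFacts.

Section ComplexContinuity.
Variable R : realType.
Implicit Types (f g : R -> R[i]) (a b : R -> R).

Definition ccontinuous f :=
  continuous (fun x => complex.Re (f x)) /\ continuous (fun x => complex.Im (f x)).

Lemma continuousD_fun a b : continuous a -> continuous b -> continuous (fun x => a x + b x).
Proof. by move=> ca cb x; exact: (continuousD (ca x) (cb x)). Qed.

Lemma continuousM_fun a b : continuous a -> continuous b -> continuous (fun x => a x * b x).
Proof. by move=> ca cb x; exact: (continuousM (ca x) (cb x)). Qed.

Lemma continuousN_fun a : continuous a -> continuous (fun x => - a x).
Proof. by move=> ca x; exact: (continuousN (ca x)). Qed.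

Lemma ccontinuousD f g : ccontinuous f -> ccontinuous g -> ccontinuous (fun x => f x + g x).
Proof.
by move=> [fr fi] [gr gi]; split=> /=; under eq_fun do rewrite raddfD; exact: continuousD_fun.
Qed.

Lemma ccontinuousN f : ccontinuous f -> ccontinuous (fun x => - f x).
Proof. by move=> [fr fi]; split=> /=; under eq_fun do rewrite raddfN; exact: continuousN_fun. Qed.

Lemma ccontinuousM f g : ccontinuous f -> ccontinuous g -> ccontinuous (fun x => f x * g x).
Proof.
move=> [fr fi] [gr gi]; split=> /=.
- under eq_fun do rewrite Re_mul.
  by apply: continuousD_fun; [|apply: continuousN_fun]; exact: continuousM_fun.
- under eq_fun do rewrite Im_mul.
  by apply: continuousD_fun; exact: continuousM_fun.
Qed.

Lemma ccontinuousJ f : ccontinuous f -> ccontinuous (fun x => (f x)^*%R).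
Proof.
move=> [fr fi]; split=> /=; first by under eq_fun do rewrite Re_conj.
by under eq_fun do rewrite Im_conj; exact: continuousN_fun.
Qed.

Lemma ccontinuous_mulJ f g :
  ccontinuous f -> ccontinuous g -> ccontinuous (fun x => f x * (g x)^*%R).
Proof. by move=> cf cg; apply: ccontinuousM => //; exact: ccontinuousJ. Qed.

Lemma ccontinuous_cst (z : R[i]) : ccontinuous (fun=> z).
Proof. by split; exact: cst_continuous. Qed.

Lemma ccontinuous_real a : continuous a -> ccontinuous (fun x => (a x)%:C).
Proof. by split => //=; exact: cst_continuous. Qed.

Lemma ccontinuous_eix : ccontinuous (@eix R).
Proof. by split; [exact: continuous_cos | exact: continuous_sin]. Qed.

Lemma ccontinuousX f k : ccontinuous f -> ccontinuous (fun x => f x ^+ k).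
Proof.
move=> cf; elim: k => [|k IH]; first by under eq_fun do rewrite expr0; exact: ccontinuous_cst.
by under eq_fun do rewrite exprS; exact: ccontinuousM.
Qed.

Lemma ccontinuous_sum K (F : nat -> R -> R[i]) : (forall i, ccontinuous (F i)) ->
  ccontinuous (fun x => \sum_(i < K) F i x).
Proof.
move=> cF; elim: K => [|K IH]; first by under eq_fun do rewrite big_ord0; exact: ccontinuous_cst.
by under eq_fun do rewrite big_ord_recr; exact: ccontinuousD.
Qed.

Lemma continuous_sqnorm f : ccontinuous f -> continuous (fun x => sqnorm (f x)).
Proof.
by move=> [fr fi]; apply: continuousD_fun; under eq_fun do rewrite expr2; exact: continuousM_fun.
Qed.

End ComplexContinuity.

(* [g] need not be measurable: it is compared with [h] through the simple functions below it. *)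
Lemma Rintegral_le_subset d (T : measurableType d) (R : realType)
    (mu : {measure set T -> \bar R}) (D E : set T) (g h : T -> R) :
  measurable E -> D `<=` E ->
  (forall x, D x -> 0 <= g x) -> (forall x, E x -> 0 <= h x) ->
  (forall x, D x -> g x <= h x) -> mu.-integrable E (EFin \o h) ->
  Rintegral mu D g <= Rintegral mu E h.
Proof.
move=> mE DE g0 h0 gh ih.
have le_gh : (\int[mu]_(x in D) (g x)%:E <= \int[mu]_(x in E) (h x)%:E)%E.
  rewrite ge0_integralE => [|x Dx]; last by rewrite lee_fin g0.
  rewrite ge0_integralE => [|x Ex]; last by rewrite lee_fin h0.
  apply: ge_ereal_sup => _ [s hs <-]; apply: ereal_sup_ubound; exists s => // x.
  apply: le_trans (hs x) _; rewrite /patch; case: ifPn => [/set_mem Dx|_].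
    by rewrite mem_set ?lee_fin ?gh //; exact: DE.
  by case: ifPn => [/set_mem Ex|_]; rewrite ?lee_fin ?h0.
have g_ge0 : (0 <= \int[mu]_(x in D) (g x)%:E)%E.
  by apply: integral_ge0 => x Dx; rewrite lee_fin g0.
move: le_gh g_ge0 (integrable_fin_num mE ih); rewrite /Rintegral.
by case: (\int[mu]_(x in D) _)%E => [r| |]; case: (\int[mu]_(x in E) _)%E.
Qed.

Lemma Rintegral0 d (T : measurableType d) (R : realType)
    (mu : {measure set T -> \bar R}) (D : set T) :
  Rintegral mu D (fun=> 0) = 0.
Proof. by rewrite /Rintegral integral0. Qed.

Section ComplexIntegral.
Variable R : realType.
Implicit Types (f g : R -> R[i]) (a b : R -> R).
Local Notation mu := (@lebesgue_measure R).

Lemma measurable_Ipi : measurable (@Ipi R).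
Proof. exact: measurable_itv. Qed.

Lemma integrable_Ipi a : continuous a -> mu.-integrable (@Ipi R) (EFin \o a).
Proof.
move=> ca; apply: continuous_compact_integrable; first exact: segment_compact.
exact: continuous_subspaceT.
Qed.

Lemma Rintegral_IpiD a b : continuous a -> continuous b ->
  Rintegral mu (@Ipi R) (fun x => a x + b x) = Rintegral mu (@Ipi R) a + Rintegral mu (@Ipi R) b.
Proof.
by move=> ca cb; rewrite RintegralD //; [exact: measurable_Ipi | exact: integrable_Ipi..].
Qed.

Lemma Rintegral_IpiB a b : continuous a -> continuous b ->
  Rintegral mu (@Ipi R) (fun x => a x - b x) = Rintegral mu (@Ipi R) a - Rintegral mu (@Ipi R) b.
Proof.
by move=> ca cb; rewrite RintegralB //; [exact: measurable_Ipi | exact: integrable_Ipi..].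
Qed.

Lemma Rintegral_IpiZ r a : continuous a ->
  Rintegral mu (@Ipi R) (fun x => r * a x) = r * Rintegral mu (@Ipi R) a.
Proof. by move=> ca; rewrite RintegralZl //; [exact: measurable_Ipi | exact: integrable_Ipi]. Qed.

Lemma cintD f g : ccontinuous f -> ccontinuous g -> cint (fun x => f x + g x) = cint f + cint g.
Proof.
move=> [fr fi] [gr gi]; rewrite /cint.
under eq_fun do rewrite raddfD; under [X in _ +i* Rintegral _ _ X]eq_fun do rewrite raddfD.
by rewrite !Rintegral_IpiD.
Qed.

Lemma cintB f g : ccontinuous f -> ccontinuous g -> cint (fun x => f x - g x) = cint f - cint g.
Proof.
move=> [fr fi] [gr gi]; rewrite /cint.
under eq_fun do rewrite raddfB; under [X in _ +i* Rintegral _ _ X]eq_fun do rewrite raddfB.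
by rewrite !Rintegral_IpiB.
Qed.

Lemma cintZ (k : R[i]) f : ccontinuous f -> cint (fun x => k * f x) = k * cint f.
Proof.
move=> [fr fi]; rewrite /cint.
under eq_fun do rewrite Re_mul; under [X in _ +i* Rintegral _ _ X]eq_fun do rewrite Im_mul.
rewrite Rintegral_IpiB ?Rintegral_IpiD ?Rintegral_IpiZ //;
  try by move=> x; apply: continuousM_fun => //; exact: cst_continuous.
by case: k => ? ?; apply/eqP; rewrite eq_complex /= !eqxx.
Qed.

Lemma cintJ f : ccontinuous f -> cint (fun x => (f x)^*%R) = (cint f)^*%R.
Proof.
move=> [fr fi]; rewrite /cint.
under eq_fun do rewrite Re_conj.
under [X in _ +i* Rintegral _ _ X]eq_fun do rewrite Im_conj -mulN1r.
by rewrite Rintegral_IpiZ // mulN1r.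
Qed.

Lemma cint0 : cint (fun=> 0 : R[i]) = 0.
Proof. by rewrite /cint /= Rintegral0. Qed.

Lemma cint_sum K (F : nat -> R -> R[i]) : (forall i, ccontinuous (F i)) ->
  cint (fun x => \sum_(i < K) F i x) = \sum_(i < K) cint (F i).
Proof.
move=> cF; elim: K => [|K IH]; first by under eq_fun do rewrite big_ord0; rewrite big_ord0 cint0.
under eq_fun do rewrite big_ord_recr; rewrite cintD ?IH ?big_ord_recr //.
exact: ccontinuous_sum.
Qed.

End ComplexIntegral.

Section Span.
Variables (R : realType) (g : nat -> R -> R[i]).

Definition spanned (K : nat) (f : R -> R[i]) :=
  exists d : nat -> R[i], forall x, f x = \sum_(m < K) d m * g m x.

Lemma spanned0 K : spanned K (fun=> 0).
Proof. by exists (fun=> 0) => x; rewrite big1 // => m _; rewrite mul0r. Qed.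

Lemma spanned_lin K (a b : R[i]) f h :
  spanned K f -> spanned K h -> spanned K (fun x => a * f x + b * h x).
Proof.
move=> [d fE] [e hE]; exists (fun m => a * d m + b * e m) => x.
rewrite fE hE !mulr_sumr -big_split; apply: eq_bigr => m _ /=; ring.
Qed.

Lemma spanned_sum K k (a : nat -> R[i]) (F : nat -> R -> R[i]) :
  (forall i, (i < k)%N -> spanned K (F i)) ->
  spanned K (fun x => \sum_(i < k) a i * F i x).
Proof.
elim: k => [|k IH] sF.
  by have [d dE] := spanned0 K; exists d => x; rewrite big_ord0 -dE.
have [d dE] := spanned_lin 1 (a k) (IH (fun i ik => sF i (leqW ik))) (sF k (ltnSn k)).
by exists d => x; rewrite big_ord_recr -dE mul1r.
Qed.

Lemma spanned_basis K m : (m < K)%N -> spanned K (g m).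
Proof.
move=> mK; exists (fun l => ((l == m)%:R)) => x.
rewrite (bigD1 (Ordinal mK)) //= eqxx mul1r big1 ?addr0 // => l.
by rewrite -val_eqE /= => /negbTE ->; rewrite mul0r.
Qed.

Lemma spanned_widen K K' f : (K <= K')%N -> spanned K f -> spanned K' f.
Proof.
move=> KK' [d fE]; exists (fun m => if (m < K)%N then d m else 0) => x.
rewrite fE (big_ord_widen _ (fun m => d m * g m x) KK') big_mkcond.
by apply: eq_bigr => m _; case: ifP; rewrite ?mul0r.
Qed.

End Span.

Lemma spanned_mull (R : realType) (g : nat -> R -> R[i]) (h f : R -> R[i]) K :
  spanned g K f -> spanned (fun m x => h x * g m x) K (fun x => h x * f x).
Proof. by move=> [d fE]; exists d => x; rewrite fE mulr_sumr; apply: eq_bigr => m _; ring. Qed.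

Section UnitaryHessenberg.
Variables (R : realType) (ps : nat -> R -> R[i]) (u : R -> R[i]).
Hypothesis ps_cont : forall k, ccontinuous (ps k).
Hypothesis ps_orthonormal :
  forall k l, cint (fun x => ps k x * (ps l x)^*%R) = ((k == l)%:R)%:C.
Hypothesis u_cont : ccontinuous u.
Hypothesis sqnorm_u : forall x, sqnorm (u x) = 1.
Hypothesis u_hessenberg : forall l, spanned ps l.+2 (fun x => u x * ps l x).

Local Notation mu := (@lebesgue_measure R).

Lemma ccontinuous_comb K (d : nat -> R[i]) : ccontinuous (fun x => \sum_(k < K) d k * ps k x).
Proof.
apply: (@ccontinuous_sum _ K (fun k x => d k * ps k x)) => k.
by apply: ccontinuousM; [exact: ccontinuous_cst | exact: ps_cont].
Qed.

Lemma cint_comb_mulJ K (d : nat -> R[i]) m :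
  cint (fun x => (\sum_(k < K) d k * ps k x) * (ps m x)^*%R) = if (m < K)%N then d m else 0.
Proof.
under eq_fun do rewrite mulr_suml; under eq_fun do under eq_bigr do rewrite -mulrA.
rewrite (@cint_sum _ K (fun k x => d k * (ps k x * (ps m x)^*%R))) => [|k]; last first.
  by apply: ccontinuousM; [exact: ccontinuous_cst | exact: ccontinuous_mulJ].
rewrite (eq_bigr (fun k : 'I_K => d k * ((k == m :> nat)%:R)%:C)) => [|k _]; last first.
  by rewrite cintZ ?ps_orthonormal //; exact: ccontinuous_mulJ.
case: ltnP => [mK|Km].
  rewrite (bigD1 (Ordinal mK)) //= eqxx mulr1 big1 ?addr0 // => k.
  by rewrite -val_eqE /= => /negbTE ->; rewrite mulr0.
by rewrite big1 // => k _; rewrite ltn_eqF ?mulr0 // (leq_trans _ Km).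
Qed.

Lemma cint_comb_mulJ_comb K (a b : nat -> R[i]) :
  cint (fun x => (\sum_(m < K) a m * ps m x) * (\sum_(k < K) b k * ps k x)^*%R)
  = \sum_(k < K) a k * (b k)^*%R.
Proof.
under eq_fun do rewrite conj_sum mulr_sumr.
rewrite (@cint_sum _ K (fun k x => (\sum_(m < K) a m * ps m x) * (b k * ps k x)^*%R))
  => [|k]; last first.
  apply: ccontinuous_mulJ; first exact: ccontinuous_comb.
  by apply: ccontinuousM; [exact: ccontinuous_cst | exact: ps_cont].
apply: eq_bigr => k _; under eq_fun do rewrite conjM mulrCA.
rewrite cintZ ?cint_comb_mulJ ?ltn_ord 1?mulrC //.
by apply: ccontinuous_mulJ; [exact: ccontinuous_comb | exact: ps_cont].
Qed.

Definition umat m l := cint (fun x => u x * ps l x * (ps m x)^*%R).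

Lemma umat_coef l (d : nat -> R[i]) :
  (forall x, u x * ps l x = \sum_(m < l.+2) d m * ps m x) ->
  forall m, umat m l = if (m < l.+2)%N then d m else 0.
Proof. by move=> dE m; rewrite /umat -cint_comb_mulJ; under eq_fun do rewrite dE. Qed.

Lemma umat_eq0 m l : (l.+1 < m)%N -> umat m l = 0.
Proof. by move=> lm; have [d /umat_coef ->] := u_hessenberg l; rewrite ltnNge lm. Qed.

Lemma u_mul_expand l N x : (l.+2 <= N)%N -> u x * ps l x = \sum_(m < N) umat m l * ps m x.
Proof.
move=> lN; have [d dE] := u_hessenberg l.
rewrite dE (big_ord_widen _ (fun m => d m * ps m x) lN) big_mkcond.
by apply: eq_bigr => m _; rewrite (umat_coef dE); case: ifP; rewrite ?mul0r.
Qed.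

Lemma sqnorm_umat_le1 m l : sqnorm (umat m l) <= 1.
Proof.
have mN : (m < maxn m.+1 l.+2)%N by rewrite leq_maxl.
have uu x : u x * (u x)^*%R = 1 by rewrite -sqnormE sqnorm_u.
have parseval : 1 = \sum_(k < maxn m.+1 l.+2) sqnorm (umat k l).
  apply: (@complexI R); rewrite rmorph_sum /=.
  transitivity (cint (fun x => u x * ps l x * (u x * ps l x)^*%R)).
    by under eq_fun do rewrite conjM mulrACA uu mul1r; rewrite ps_orthonormal eqxx.
  under eq_fun do rewrite (u_mul_expand _ (leq_maxr m.+1 l.+2)).
  rewrite (cint_comb_mulJ_comb _ (fun k => umat k l) (fun k => umat k l)).
  by apply: eq_bigr => k _; rewrite -sqnormE.
rewrite parseval (bigD1 (Ordinal mN)) //= lerDl.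
by apply: sumr_ge0 => k _; exact: sqnorm_ge0.
Qed.

Definition kernel n x y := \sum_(l < n) ps l x * (ps l y)^*%R.

Lemma kernel0 x y : kernel 0 x y = 0.
Proof. exact: big_ord0. Qed.

Lemma ccontinuous_kernel n lam : ccontinuous (kernel n lam).
Proof.
apply: (@ccontinuous_sum _ n (fun l y => ps l lam * (ps l y)^*%R)) => l.
by apply: ccontinuous_mulJ; [exact: ccontinuous_cst | exact: ps_cont].
Qed.

Lemma ccontinuous_sqnorm_kernel n lam : ccontinuous (fun x => (sqnorm (kernel n lam x))%:C).
Proof. exact/ccontinuous_real/continuous_sqnorm/ccontinuous_kernel. Qed.

Lemma sqnorm_kernelE n lam x : (sqnorm (kernel n lam x))%:C =
  (\sum_(l < n) (ps l lam)^*%R * ps l x) * (\sum_(l < n) (ps l lam)^*%R * ps l x)^*%R.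
Proof.
have -> : \sum_(l < n) (ps l lam)^*%R * ps l x = (kernel n lam x)^*%R.
  by rewrite conj_sum; apply: eq_bigr => l _; rewrite conjM conjCK.
by rewrite -sqnormJ sqnormE.
Qed.

Lemma cint_sqnorm_kernel n lam :
  cint (fun x => (sqnorm (kernel n lam x))%:C) = \sum_(l < n) (sqnorm (ps l lam))%:C.
Proof.
under eq_fun do rewrite sqnorm_kernelE.
rewrite (cint_comb_mulJ_comb _ (fun l => (ps l lam)^*%R) (fun l => (ps l lam)^*%R)).
by apply: eq_bigr => l _; rewrite -sqnormE sqnormJ.
Qed.

Lemma cint_u_sqnorm_kernel N lam :
  cint (fun x => u x * (sqnorm (kernel N.+1 lam x))%:C) =
  u lam * \sum_(l < N.+1) (sqnorm (ps l lam))%:C - (ps N lam)^*%R * umat N.+1 N * ps N.+1 lam.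
Proof.
pose a l := (ps l lam)^*%R.
have u_comb x : u x * \sum_(l < N.+1) a l * ps l x =
    \sum_(m < N.+2) (\sum_(l < N.+1) a l * umat m l) * ps m x.
  rewrite mulr_sumr; under [RHS]eq_bigr do rewrite mulr_suml; rewrite exchange_big.
  apply: eq_bigr => l _; rewrite mulrCA (u_mul_expand (N := N.+2) x (ltn_ord l)).
  by rewrite mulr_sumr; apply: eq_bigr => m _; rewrite mulrA.
have comb_widen x : \sum_(l < N.+1) a l * ps l x =
    \sum_(m < N.+2) (if (m < N.+1)%N then a m else 0) * ps m x.
  by rewrite [RHS]big_ord_recr /= ltnn mul0r addr0; apply: eq_bigr => m _; rewrite ltn_ord.
have truncate (l : 'I_N.+1) :
    \sum_(m < N.+1) umat m l * ps m lam = u lam * ps l lam - umat N.+1 l * ps N.+1 lam.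
  by rewrite (u_mul_expand (N := N.+2) lam (ltn_ord l)) [in RHS]big_ord_recr addrK.
under eq_fun do rewrite sqnorm_kernelE mulrA u_comb comb_widen.
rewrite (cint_comb_mulJ_comb _ (fun m => \sum_(l < N.+1) a l * umat m l)
  (fun m => if (m < N.+1)%N then a m else 0)).
rewrite big_ord_recr /= ltnn conjC0 mulr0 addr0.
under eq_bigr do rewrite ltn_ord conjCK mulr_suml.
rewrite exchange_big /=.
under eq_bigr do under eq_bigr do rewrite -mulrA.
under eq_bigr do rewrite -mulr_sumr truncate mulrBr mulrCA.
rewrite sumrB mulr_sumr; congr (_ - _).
  by apply: eq_bigr => l _; rewrite sqnormE; congr (_ * _); exact: mulrC.
rewrite big_ord_recr /= big1 ?add0r ?mulrA // => l _.
by rewrite umat_eq0 ?mul0r ?mulr0 // ltnS ltn_ord.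
Qed.

Lemma cint_kernel_first_moment N lam :
  cint (fun x => (u lam - u x) * (sqnorm (kernel N.+1 lam x))%:C) =
  (ps N lam)^*%R * umat N.+1 N * ps N.+1 lam.
Proof.
have ck := ccontinuous_sqnorm_kernel N.+1 lam.
under eq_fun do rewrite mulrBl.
rewrite cintB ?cintZ ?cint_sqnorm_kernel ?cint_u_sqnorm_kernel //.
- by rewrite opprB addrC subrK.
- by apply: ccontinuousM => //; exact: ccontinuous_cst.
- exact: ccontinuousM.
Qed.

Lemma cint_kernel_second_moment N lam :
  let w := (u lam)^*%R * ((ps N lam)^*%R * umat N.+1 N * ps N.+1 lam) in
  cint (fun x => (sqnorm (u lam - u x) * sqnorm (kernel N.+1 lam x))%:C) = w + w^*%R.
Proof.
move=> w; pose g x := (u lam - u x) * (sqnorm (kernel N.+1 lam x))%:C.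
have cg : ccontinuous g.
  apply: ccontinuousM; last exact: ccontinuous_sqnorm_kernel.
  by apply: ccontinuousD; [exact: ccontinuous_cst | exact: ccontinuousN].
have -> : (fun x => (sqnorm (u lam - u x) * sqnorm (kernel N.+1 lam x))%:C) =
    (fun x => (u lam)^*%R * g x + ((u lam)^*%R * g x)^*%R).
  apply/funext => x; rewrite realM sqnorm_sub_unit ?sqnorm_u // !conjM conj_real /g; ring.
have czg : ccontinuous (fun x => (u lam)^*%R * g x).
  by apply: ccontinuousM => //; exact: ccontinuous_cst.
by rewrite cintD ?cintJ ?cintZ ?cint_kernel_first_moment //; exact: ccontinuousJ.
Qed.

Lemma sqnorm_boundary_le N lam :
  sqnorm ((ps N lam)^*%R * umat N.+1 N * ps N.+1 lam) <= sqnorm (ps N lam) * sqnorm (ps N.+1 lam).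
Proof.
rewrite !sqnormM sqnormJ mulrAC; apply: ler_piMr; last exact: sqnorm_umat_le1.
by rewrite mulr_ge0 ?sqnorm_ge0.
Qed.

Lemma kernel_first_moment_le n lam :
  `|cint (fun x => (u lam - u x) * (sqnorm (kernel n lam x))%:C)|
  <= (2^-1 * (sqnorm (ps n.-1 lam) + sqnorm (ps n lam)))%:C.
Proof.
case: n => [|N].
  under eq_fun do rewrite kernel0 sqnormE mul0r mulr0.
  rewrite cint0 normr0 ler0c mulr_ge0 ?invr_ge0 //.
  by apply: addr_ge0; exact: sqnorm_ge0.
rewrite cint_kernel_first_moment; apply: normc_le_mean; rewrite ?sqnorm_ge0 //.
exact: sqnorm_boundary_le.
Qed.

Lemma kernel_second_moment_le n lam :
  Rintegral mu (@Ipi R) (fun x => sqnorm (u lam - u x) * sqnorm (kernel n lam x))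
  <= sqnorm (ps n.-1 lam) + sqnorm (ps n lam).
Proof.
case: n => [|N].
  under eq_fun do rewrite kernel0 sqnorm0 mulr0.
  by rewrite Rintegral0; apply: addr_ge0; exact: sqnorm_ge0.
change (complex.Re (cint (fun x => (sqnorm (u lam - u x) * sqnorm (kernel N.+1 lam x))%:C))
  <= sqnorm (ps N lam) + sqnorm (ps N.+1 lam)).
rewrite cint_kernel_second_moment /=.
set w := _ * _; rewrite raddfD /= Re_conj -mulr2n -mulr_natl -ler_pdivlMl //.
rewrite -lecR; apply: le_trans (Re_le_normc w) _; apply: normc_le_mean; rewrite ?sqnorm_ge0 //.
by rewrite /w sqnormM sqnormJ sqnorm_u mul1r; exact: sqnorm_boundary_le.
Qed.

Lemma kernel_tail_le n lam delta : 0 < delta ->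
  Rintegral mu (@Ipi R `&` [set x | delta < Num.sqrt (sqnorm (u lam - u x))])
    (fun x => sqnorm (kernel n lam x))
  <= delta ^- 2 * (sqnorm (ps n.-1 lam) + sqnorm (ps n lam)).
Proof.
move=> delta0; have delta2 : 0 < delta ^+ 2 by rewrite exprn_gt0.
have cd2 : continuous (fun x => sqnorm (u lam - u x)).
  by apply: continuous_sqnorm; apply: ccontinuousD; [exact: ccontinuous_cst | exact: ccontinuousN].
have ck := continuous_sqnorm (ccontinuous_kernel n lam).
have idelta2 : 0 <= delta ^- 2 by rewrite invr_ge0 ltW.
apply: (le_trans _ (ler_wpM2l idelta2 (kernel_second_moment_le n lam))).
rewrite -Rintegral_IpiZ; last exact: continuousM_fun.
apply: Rintegral_le_subset.
- exact: measurable_Ipi.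
- exact: subIsetl.
- by move=> x _; exact: sqnorm_ge0.
- move=> x _; rewrite mulr_ge0 ?invr_ge0 ?mulr_ge0 ?sqnorm_ge0 //; exact: ltW.
- move=> x [_ /= far]; rewrite mulrA -[X in X <= _]mul1r ler_wpM2r ?sqnorm_ge0 //.
  rewrite ler_pdivlMl // mulr1.
  by have := sqr_sqrtr (sqnorm_ge0 (u lam - u x)); nra.
- apply: integrable_Ipi; apply: continuousM_fun => //; first exact: cst_continuous.
  exact: continuousM_fun.
Qed.

Lemma Rintegral_sqnorm_ps k : Rintegral mu (@Ipi R) (fun x => sqnorm (ps k x)) = 1.
Proof.
change (complex.Re (cint (fun x => (sqnorm (ps k x))%:C)) = 1).
by under eq_fun do rewrite sqnormE; rewrite ps_orthonormal eqxx.
Qed.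

Lemma Rintegral_sqnorm_psD n :
  Rintegral mu (@Ipi R) (fun x => sqnorm (ps n.-1 x) + sqnorm (ps n x)) = 2.
Proof. by rewrite Rintegral_IpiD ?Rintegral_sqnorm_ps //; exact: continuous_sqnorm. Qed.

Lemma kernel_second_moment_integral_le n :
  Rintegral mu (@Ipi R) (fun lam =>
    Rintegral mu (@Ipi R) (fun x => sqnorm (u lam - u x) * sqnorm (kernel n lam x))) <= 2.
Proof.
rewrite -(Rintegral_sqnorm_psD n).
apply: Rintegral_le_subset => //.
- exact: measurable_Ipi.
- by move=> lam _; apply: Rintegral_ge0 => x _; rewrite mulr_ge0 ?sqnorm_ge0.
- by move=> x _; rewrite addr_ge0 ?sqnorm_ge0.
- by move=> lam _; exact: kernel_second_moment_le.
- by apply: integrable_Ipi; apply: continuousD_fun; exact: continuous_sqnorm.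
Qed.

Lemma kernel_tail_integral_le n delta : 0 < delta ->
  Rintegral mu (@Ipi R) (fun lam =>
    Rintegral mu (@Ipi R `&` [set x | delta < Num.sqrt (sqnorm (u lam - u x))])
      (fun x => sqnorm (kernel n lam x)))
  <= 2 * delta ^- 2.
Proof.
move=> delta0; have cS : continuous (fun x => sqnorm (ps n.-1 x) + sqnorm (ps n x)).
  by apply: continuousD_fun; exact: continuous_sqnorm.
rewrite -(Rintegral_sqnorm_psD n) mulrC -Rintegral_IpiZ //.
apply: Rintegral_le_subset => //.
- exact: measurable_Ipi.
- by move=> lam _; apply: Rintegral_ge0 => x _; exact: sqnorm_ge0.
- move=> x _; apply: mulr_ge0; first by rewrite invr_ge0 exprn_ge0 // ltW.
  by apply: addr_ge0; exact: sqnorm_ge0.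
- by move=> lam _; exact: kernel_tail_le.
- by apply: integrable_Ipi; apply: continuousM_fun => //; exact: cst_continuous.
Qed.

End UnitaryHessenberg.

Lemma continuous_comp_cos (R : realType) (V : R -> R) :
  {within `[-1, 1]%classic, continuous V} -> continuous (fun t => V (cos t)).
Proof.
move=> Vc x; have cos_in (y : R) : cos y \in `[-1, 1] by rewrite in_itv /= cos_geN1 cos_le1.
apply: (@cvg_comp _ _ _ cos V _ (within `[-1, 1]%classic (nbhs (cos x)))).
  move=> A /= /(@continuous_cos R x) cosA.
  by apply: (@filterS _ (nbhs x) _ _ _ _ cosA) => y /= Ay; apply: Ay; exact: cos_in.
exact: (proj1 (subspace_continuousP _ _) Vc (cos x) (cos_in x)).
Qed.

Section GramSchmidt.
Variables (R : realType) (V : R -> R) (c : nat -> nat -> nat -> R[i]) (n : nat).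
Hypothesis Vcos_cont : continuous (fun t => V (cos t)).
Hypothesis gs : gram_schmidt_coefs V c.

Local Notation P := (Ppoly c n).
Local Notation ps := (psi V c n).

Lemma ccontinuous_psi k : ccontinuous (ps k).
Proof.
apply: ccontinuousM.
  apply/ccontinuous_real; move=> x; apply: continuous_comp; last exact: continuous_expR.
  apply: continuousM_fun; last exact: cst_continuous.
  by apply: continuousN_fun; apply: continuousM_fun => //; exact: cst_continuous.
apply: (@ccontinuous_sum _ k.+1 (fun j x => c n k j * eix x ^+ j)) => j.
by apply: ccontinuousM; [exact: ccontinuous_cst | apply: ccontinuousX; exact: ccontinuous_eix].
Qed.

Lemma psi_orthonormal k l : cint (fun x => ps k x * (ps l x)^*%R) = ((k == l)%:R)%:C.
Proof.
have [_ [_ <-]] := gs n; congr cint; apply/funext => x.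
rewrite /psi /weight conjM conj_real.
set e := - (n%:R * V (cos x)).
have -> : expR e = expR (e / 2) * expR (e / 2) by rewrite -expRD -splitr.
by rewrite realM; ring.
Qed.

Lemma eixX_spanned j : spanned P j.+1 (fun x => eix x ^+ j).
Proof.
elim/ltn_ind: j => j IH.
have [_ [c_pos _]] := gs n; have cjj : c n j j != 0 by rewrite gt_eqF.
have [d dE] := spanned_lin (c n j j)^-1 (- (c n j j)^-1) (spanned_basis P (ltnSn j))
  (spanned_sum (fun i => c n j i) (fun i ij => spanned_widen (leqW ij) (IH i ij))).
by exists d => x; rewrite -dE /Ppoly big_ord_recr /=; field.
Qed.

Lemma eix_psi_spanned l : spanned ps l.+2 (fun x => eix x * ps l x).
Proof.
have := @spanned_sum _ P l.+2 l.+1 (fun i => c n l i) (fun i x => eix x ^+ i.+1)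
  (fun i il => spanned_widen (il : (i.+2 <= l.+2)%N) (eixX_spanned i.+1)).
move/(spanned_mull (fun x => (expR (- (n%:R * V (cos x)) / 2))%:C)) => [d dE].
exists d => x; rewrite -dE /psi /Ppoly mulrCA mulr_sumr; congr (_ * _).
by apply: eq_bigr => i _; rewrite exprS mulrCA.
Qed.

End GramSchmidt.

Theorem lemma1 (R : realType) (V : R -> R) (c : nat -> nat -> nat -> R[i])
    (rho : R -> R) (a b C1 C2 : R) :
  {within `[-1, 1]%classic, continuous V} ->
  (forall x, x \in `[-1, 1] -> 0 <= V x) ->
  (forall x, x \in `]- pi, pi[ ->
     derivable (fun t => V (cos t)) x 1 /\
     derivable (derive1 (fun t => V (cos t))) x 1) ->
  {within `]- pi, pi[%classic, continuous (derive1 (derive1 (fun t => V (cos t))))} ->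
  gram_schmidt_coefs V c ->
  limit_density V rho ->
  a < b -> `]a, b[ `<=` limit_support rho ->
  0 < C1 -> 0 < C2 ->
  (forall x, x \in `]a, b[ ->
     derivable (derive1 (derive1 (fun t => V (cos t)))) x 1 /\
     `|derive1 (derive1 (derive1 (fun t => V (cos t)))) x| <= C1) ->
  (forall x, x \in `]a, b[ -> C2 <= rho x) ->
  forall delta : R, 0 < delta ->
  forall (n : nat) (lam : R), lam \in `[- pi, pi] ->
  let Ksq := fun x y => sqnorm (Kn V c n x y) in
  let d2 := fun x y : R => sqnorm (eix x - eix y) in
  let S := fun x => sqnorm (psi V c n n.-1 x) + sqnorm (psi V c n n x) in
  let mu := @lebesgue_measure R in
  [/\ `| cint (fun m => (eix lam - eix m) * (Ksq lam m)%:C) | <= (2^-1 * S lam)%:C,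
      Rintegral mu (@Ipi R) (fun m => d2 lam m * Ksq lam m) <= S lam,
      Rintegral mu (@Ipi R) (fun l => Rintegral mu (@Ipi R) (fun m => d2 l m * Ksq l m)) <= 2,
      Rintegral mu (@Ipi R `&` [set m | delta < Num.sqrt (d2 lam m)]) (fun m => Ksq lam m)
        <= delta ^- 2 * S lam
    & Rintegral mu (@Ipi R) (fun l =>
        Rintegral mu (@Ipi R `&` [set m | delta < Num.sqrt (d2 l m)]) (fun m => Ksq l m))
        <= 2 * delta ^- 2].
Proof.
move=> V_cont _ _ _ gs _ _ _ _ _ _ _ delta delta0 n lam _ /=.
have Vcos_cont := continuous_comp_cos V_cont.
have ps_cont := ccontinuous_psi c n Vcos_cont.
have ps_orthonormal := psi_orthonormal n gs.
have hessenberg := eix_psi_spanned n gs.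
have eix_cont := @ccontinuous_eix R.
have eix_unit := @sqnorm_eix R.
split.
- exact: kernel_first_moment_le.
- exact: kernel_second_moment_le.
- exact: kernel_second_moment_integral_le.
- exact: kernel_tail_le.
- exact: kernel_tail_integral_le.
Qed.
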